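(* Let $N$ be a probabilistic algorithmic knowledge structure, $i$ an agent, and $\phi$ a formula containing no occurrence of any $X_j$ operator. If $\mathtt{A}_i$ respects negation, is $\phi$-complete, and is $(\alpha,\beta)$-reliable for $\phi$ in $N$, then (a) $N\models X_i\phi\wedge\neg K_i\neg\phi\Rightarrow\left(\underline{\mathrm{Ev}}_i(\phi)\ge\frac{\alpha}{\alpha+\beta}\wedge\overline{\mathrm{Ev}}_i(\neg\phi)\le\frac{\beta}{\alpha+\beta}\right)$ if $(\alpha,\beta)\ne(0,0)$; (b) $N\models X_i\phi\wedge\neg K_i\neg\phi\Rightarrow\left(\underline{\mathrm{Ev}}_i(\phi)=1\wedge\overline{\mathrm{Ev}}_i(\neg\phi)=0\right)$ if $(\alpha,\beta)=(0,0)$; (c) $N\models X_i\neg\phi\wedge\neg K_i\phi\Rightarrow\left(\underline{\mathrm{Ev}}_i(\neg\phi)\ge\frac{1-\beta}{2-(\alpha+\beta)}\wedge\overline{\mathrm{Ev}}_i(\phi)\le\frac{1-\alpha}{2-(\alpha+\beta)}\right)$ if $(\alpha,\beta)\ne(1,1)$; (d) $N\models X_i\neg\phi\wedge\neg K_i\phi\Rightarrow\left(\underline{\mathrm{Ev}}_i(\neg\phi)\ge\frac12\wedge\overline{\mathrm{Ev}}_i(\phi)\le\frac12\right)$ if $(\alpha,\beta)=(1,1)$.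
   Context: A derandomizer is $v=(v_1,\dots,v_n)$ with each $v_i$ a sequence of coin-toss outcomes; $V$ is the set of derandomizers. A probabilistic algorithmic knowledge structure is $N=(S,\pi,L_1,\dots,L_n,\mathtt{A}^d_1,\dots,\mathtt{A}^d_n,\nu)$ with states $S$, truth assignments $\pi(s)$ to primitive propositions, local-state functions $L_i:S\to\mathcal{L}$, deterministic functions $\mathtt{A}^d_i(\psi,\ell,s,v_i)\in\{$''Yes'',''No'',''?''$\}$ (derandomized version of agent $i$'s knowledge algorithm $\mathtt{A}_i$), and a probability distribution $\nu$ on $V$ such that each answer set $\{v:\mathtt{A}^d_i(\psi,L_i(s),s,v_i)=a\}$ is nonempty iff it has positive $\nu$-probability. Semantics at pairs $(s,v)$: primitive propositions via $\pi$, $\neg,\wedge,\Rightarrow$ usual, $(N,s,v)\models K_i\psi$ iff $(N,t,v')\models\psi$ for all $v'\in V$ and all $t$ with $L_i(t)=L_i(s)$, $(N,s,v)\models X_i\psi$ iff $\mathtt{A}^d_i(\psi,L_i(s),s,v_i)=$''Yes'', $(N,s,v)\models\Pr(\psi)\ge\alpha$ iff $\nu(\{v':(N,s,v')\models\psi\})\ge\alpha$; $N\models\chi$ means $(N,s,v)\models\chi$ for all $s,v$. For $\psi$ with no $X_j$, write $(N,s)\models\psi$ (independent of $v$). For such $\psi$ and local state $\ell$ of agent $i$: $S_\ell=\{s:L_i(s)=\ell\}$, $S_{\ell,\psi}=\{s\in S_\ell:(N,s)\models\psi\}$, $S_{\ell,\neg\psi}=\{s\in S_\ell:(N,s)\models\neg\psi\}$;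 $\mu_{s,\psi}(\mathit{ob})=\nu(\{v':\mathtt{A}^d_i(\psi,L_i(s),s,v'_i)=\mathit{ob}\})$; $\mathcal{F}_{\ell,\psi}(\psi)=\{\mu_{s,\psi}:s\in S_{\ell,\psi}\}$, $\mathcal{F}_{\ell,\psi}(\neg\psi)=\{\mu_{s,\psi}:s\in S_{\ell,\neg\psi}\}$; evidence space $\mathcal{E}_{\mathtt{A}_i,\psi,\ell}=(\{\psi,\neg\psi\},\{$''Yes'',''No'',''?''$\},\mathcal{F}_{\ell,\psi})$. For $\mathcal{E}=(\mathcal{H},\mathcal{O},\mathcal{F})$, $\mathcal{W}_{\mathcal{E}}(\mathit{ob},h)$ is the set of values $\mu_h(\mathit{ob})/\sum_{h'\in\mathcal{H},\mathcal{F}(h')\ne\emptyset}\mu_{h'}(\mathit{ob})$ over all choices $\mu_{h'}\in\mathcal{F}(h')$ (one per $h'$ with $\mathcal{F}(h')\ne\emptyset$) with nonzero denominator; $\underline{w}_{\mathcal{E}}=\inf\mathcal{W}_{\mathcal{E}}$, $\overline{w}_{\mathcal{E}}=\sup\mathcal{W}_{\mathcal{E}}$, both $0$ if the set is empty. $(N,s,v)\models\underline{\mathrm{Ev}}_i(\psi)\ge\alpha$ iff $\underline{w}_{\mathcal{E}_{\mathtt{A}_i,\psi,L_i(s)}}(\mathtt{A}^d_i(\psi,L_i(s),s,v_i),\psi)\ge\alpha$, similarly for $\le,=$ and for $\overline{\mathrm{Ev}}_i$ with $\overline{w}$. $\mathtt{A}_i$ is $\phi$-complete if $\mathtt{A}^d_i(\phi,L_i(s),s,v_i)\in\{$''Yes'',''No''$\}$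 for all $s,v$. For $\alpha,\beta\in[0,1]$, $\mathtt{A}_i$ is $(\alpha,\beta)$-reliable for $\phi$ in $N$ if for all $s,v$: $(N,s,v)\models\phi$ implies $\mu_{s,\phi}($''Yes''$)\ge\alpha$, and $(N,s,v)\models\neg\phi$ implies $\mu_{s,\phi}($''Yes''$)\le\beta$. $\mathtt{A}_i$ weakly respects negation if for all $\psi,\ell,s,v$: $\mathtt{A}^d_i(\neg\psi,\ell,s,v_i)$ is ''Yes'' when $\mathtt{A}^d_i(\psi,\ell,s,v_i)=$''No'', ''No'' when it is ''Yes'', ''?'' when it is ''?''; it strongly respects negation if $\mathtt{A}^d_i(\neg\psi,\ell,s,v_i)$ is ''Yes'' when $\mathtt{A}^d_i(\psi,\ell,s,v_i)\ne$''Yes'' and ''No'' when it is ''Yes''; it respects negation if it weakly or strongly respects negation. *)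

From HB Require Import structures.
From mathcomp Require Import all_boot all_order all_algebra.
From mathcomp Require Import all_classical all_reals all_analysis.

Set Implicit Arguments.
Unset Strict Implicit.
Unset Printing Implicit Defensive.

Import Order.TTheory GRing.Theory Num.Theory.
Local Open Scope classical_set_scope.
Local Open Scope ring_scope.

Inductive answer := Yes | No | DontKnow.

(* Formulas of the logic (n agents, primitive propositions of type P,
   probability thresholds in R).  X_i is the algorithmic-knowledge operator,
   Pr(psi) >= a the probability operator. *)
Inductive pform (n : nat) (P : Type) (R : Type) : Type :=
| Prim of P
| Neg of pform n P R
| And of pform n P R & pform n P R
| Imp of pform n P R & pform n P R
| Know of 'I_n & pform n P R
| Xalg of 'I_n & pform n P R
| PrGe of pform n P R & R.

Arguments Prim {n P R}.
Arguments Neg {n P R}.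
Arguments And {n P R}.
Arguments Imp {n P R}.
Arguments Know {n P R}.
Arguments Xalg {n P R}.
Arguments PrGe {n P R}.

Fixpoint xfree n P R (f : pform n P R) : bool :=
  match f with
  | Prim _ => true
  | Neg g => xfree g
  | And g h => xfree g && xfree h
  | Imp g h => xfree g && xfree h
  | Know _ g => xfree g
  | Xalg _ _ => false
  | PrGe g _ => xfree g
  end.

(* V is the set of derandomizers: it is identified (via the bijection vcomp)
   with the tuples v = (v_1,...,v_n) of coin-toss sequences (of type C);
   vcomp v i is the component v_i.  Ad i psi l s c is the derandomized
   algorithm A^d_i(psi, l, s, c).  nu is a probability on V. *)
Record pak_structure (R : realType) (n : nat) (P C Lst : Type)
    (d : measure_display) (V : measurableType d) := PAK {
  state : Type;
  pi : state -> P -> bool;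
  L : 'I_n -> state -> Lst;
  vcomp : V -> 'I_n -> C;
  vcomp_bij : bijective vcomp;
  Ad : 'I_n -> pform n P R -> Lst -> state -> C -> answer;
  nu : probability V R;
  answer_set_measurable : forall i psi s a,
    measurable [set v | Ad i psi (L i s) s (vcomp v i) = a];
  answer_set_pos : forall i psi s a,
    [set v | Ad i psi (L i s) s (vcomp v i) = a] !=set0 <->
    (0 < nu [set v | Ad i psi (L i s) s (vcomp v i) = a])%E
}.

Arguments state {R n P C Lst d V} p.
Arguments pi {R n P C Lst d V} p.
Arguments L {R n P C Lst d V} p.
Arguments vcomp {R n P C Lst d V} p.
Arguments Ad {R n P C Lst d V} p.
Arguments nu {R n P C Lst d V} p.

Section Semantics.
Variables (R : realType) (n : nat) (P C Lst : Type) (d : measure_display)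
  (V : measurableType d).
Variable N : pak_structure R n P C Lst V.

Local Notation S := (state N).
Local Notation F := (pform n P R).

Fixpoint sat (s : S) (v : V) (f : F) {struct f} : Prop :=
  match f with
  | Prim p => pi N s p
  | Neg g => ~ sat s v g
  | And g h => sat s v g /\ sat s v h
  | Imp g h => sat s v g -> sat s v h
  | Know i g => forall (t : S) (v' : V), L N i t = L N i s -> sat t v' g
  | Xalg i g => Ad N i g (L N i s) s (vcomp N v i) = Yes
  | PrGe g a => (a%:E <= nu N [set v' | sat s v' g])%E
  end.

Definition valid (f : F) : Prop := forall (s : S) (v : V), sat s v f.

Definition mu (i : 'I_n) (psi : F) (s : S) (ob : answer) : R :=
  fine (nu N [set v | Ad N i psi (L N i s) s (vcomp N v i) = ob]).

(* S_{l,psi} and S_{l,~psi}; for X-free psi truth does not depend on v,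
   and we use "true for every derandomizer". *)
Definition S_l_psi (i : 'I_n) (l : Lst) (psi : F) : set S :=
  [set t | L N i t = l /\ forall v, sat t v psi].

(* F_{l,psi} : hypothesis true = psi, false = ~psi *)
Definition Fam (i : 'I_n) (psi : F) (l : Lst) (h : bool) : set (answer -> R) :=
  [set mu i psi t | t in S_l_psi i l (if h then psi else Neg psi)].

End Semantics.

Arguments sat {R n P C Lst d V} N.
Arguments valid {R n P C Lst d V} N.
Arguments mu {R n P C Lst d V} N.
Arguments S_l_psi {R n P C Lst d V} N.
Arguments Fam {R n P C Lst d V} N.

Definition Wset (R : realType) (Fm : bool -> set (answer -> R)) (ob : answer)
    (h : bool) : set R :=
  [set w | exists c : bool -> answer -> R,
     (forall h', Fm h' !=set0 -> Fm h' (c h')) /\ Fm h !=set0 /\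
     (\sum_(h' : bool | `[< Fm h' !=set0 >]) c h' ob) != 0 /\
     w = c h ob / (\sum_(h' : bool | `[< Fm h' !=set0 >]) c h' ob)].

Definition wlow (R : realType) (Fm : bool -> set (answer -> R)) ob h : R :=
  if `[< Wset Fm ob h = set0 >] then 0 else inf (Wset Fm ob h).
Definition wup (R : realType) (Fm : bool -> set (answer -> R)) ob h : R :=
  if `[< Wset Fm ob h = set0 >] then 0 else sup (Wset Fm ob h).

Section Evidence.
Variables (R : realType) (n : nat) (P C Lst : Type) (d : measure_display)
  (V : measurableType d).
Variable N : pak_structure R n P C Lst V.

Definition EvLow (i : 'I_n) (psi : pform n P R) (s : state N) (v : V) : R :=
  wlow (Fam N i psi (L N i s)) (Ad N i psi (L N i s) s (vcomp N v i)) true.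
Definition EvUp (i : 'I_n) (psi : pform n P R) (s : state N) (v : V) : R :=
  wup (Fam N i psi (L N i s)) (Ad N i psi (L N i s) s (vcomp N v i)) true.

Definition phi_complete (i : 'I_n) (phi : pform n P R) : Prop :=
  forall s v, Ad N i phi (L N i s) s (vcomp N v i) = Yes \/
              Ad N i phi (L N i s) s (vcomp N v i) = No.

Definition reliable (i : 'I_n) (phi : pform n P R) (a b : R) : Prop :=
  forall s v,
    (sat N s v phi -> a <= mu N i phi s Yes) /\
    (sat N s v (Neg phi) -> mu N i phi s Yes <= b).

Definition weakly_respects_negation (i : 'I_n) : Prop :=
  forall psi l s v,
    Ad N i (Neg psi) l s (vcomp N v i) =
    match Ad N i psi l s (vcomp N v i) with
    | No => Yes | Yes => No | DontKnow => DontKnow end.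

Definition strongly_respects_negation (i : 'I_n) : Prop :=
  forall psi l s v,
    Ad N i (Neg psi) l s (vcomp N v i) =
    match Ad N i psi l s (vcomp N v i) with
    | Yes => No | _ => Yes end.

Definition respects_negation (i : 'I_n) : Prop :=
  weakly_respects_negation i \/ strongly_respects_negation i.

End Evidence.

Arguments EvLow {R n P C Lst d V} N.
Arguments EvUp {R n P C Lst d V} N.
Arguments phi_complete {R n P C Lst d V} N.
Arguments reliable {R n P C Lst d V} N.
Arguments weakly_respects_negation {R n P C Lst d V} N.
Arguments strongly_respects_negation {R n P C Lst d V} N.
Arguments respects_negation {R n P C Lst d V} N.

From HB Require Import structures.
From mathcomp Require Import all_boot all_order all_algebra.
From mathcomp Require Import all_classical all_reals all_analysis.
From mathcomp Require Import lra.

Set Implicit Arguments.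
Unset Strict Implicit.
Unset Printing Implicit Defensive.

Import Order.TTheory GRing.Theory Num.Theory.
Local Open Scope classical_set_scope.
Local Open Scope ring_scope.

(* By reliability, every measure attached to a state satisfying phi gives the
   answer "Yes" probability at least alpha, and every measure attached to a state
   satisfying ~ phi gives it at most beta; for a phi-complete algorithm that
   respects negation, the answers "No" to phi and "Yes" to ~ phi carry the
   complementary probability.  So, writing (A, B) = (alpha, beta) after X_i phi
   and (1 - beta, 1 - alpha) after X_i ~ phi, every weight of evidence for the
   favoured hypothesis is a ratio x / (x + y) with A <= x and 0 <= y <= B, hence
   at least A / (A + B), and every weight for the other one is at most
   B / (A + B); when B = 0 they are exactly 1 and 0.  The negated knowledge
   hypothesis makes the relevant evidence families nonempty, and the observed
   answer has positive probability, so the sets of weights are nonempty. *)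

Definition favours (R : realType) (Fm : bool -> set (answer -> R)) (ob : answer)
    (A B : R) : Prop :=
  (forall f, Fm true f -> A <= f ob) /\ (forall f, Fm false f -> 0 <= f ob <= B).

Lemma ratio_ge_margin (R : realType) (A B x y : R) :
  0 <= A -> 0 <= B -> 0 < A + B -> A <= x -> 0 <= y <= B -> x + y != 0 ->
  A / (A + B) <= x / (x + y).
Proof.
move=> A_ge0 B_ge0 AB_gt0 Ax /andP[y_ge0 yB] xy_neq0.
have xy_gt0 : 0 < x + y by rewrite lt0r xy_neq0 /=; lra.
by rewrite ler_pdivrMr // mulrAC ler_pdivlMr //; nra.
Qed.

Lemma ratio_le_margin (R : realType) (A B x y : R) :
  0 <= A -> 0 <= B -> 0 < A + B -> A <= x -> 0 <= y <= B -> y + x != 0 ->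
  y / (y + x) <= B / (A + B).
Proof.
move=> A_ge0 B_ge0 AB_gt0 Ax /andP[y_ge0 yB] yx_neq0.
have yx_gt0 : 0 < y + x by rewrite lt0r yx_neq0 /=; lra.
by rewrite ler_pdivrMr // mulrAC ler_pdivlMr //; nra.
Qed.

Section EvidenceWeights.
Variables (R : realType) (Fm : bool -> set (answer -> R)) (ob : answer).

Local Notation W := (Wset Fm ob true).

Lemma sum_nonempty_hyps (F : bool -> R) :
  \sum_(h : bool | `[< Fm h !=set0 >]) F h =
  (if `[< Fm true !=set0 >] then F true else 0) +
  (if `[< Fm false !=set0 >] then F false else 0).
Proof. by rewrite big_mkcond big_bool. Qed.

Lemma Wset_true_inv w : W w ->
  exists f y, [/\ Fm true f, Fm false !=set0 -> exists2 g, Fm false g & y = g ob,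
                  ~ (Fm false !=set0) -> y = 0, f ob + y != 0 & w = f ob / (f ob + y)].
Proof.
move=> [c [Fc [Ftrue [+ ->]]]]; rewrite sum_nonempty_hyps asboolT //=.
have [Ffalse|Ffalse0] := pselect (Fm false !=set0).
- rewrite asboolT // => sum_neq0; exists (c true), (c false ob).
  by split=> //; [exact: Fc | exists (c false); first exact: Fc].
- rewrite asboolF // addr0 => sum_neq0; exists (c true), 0.
  by rewrite addr0; split=> //; exact: Fc.
Qed.

Lemma Wset_true_neq0 :
  (forall h f, Fm h f -> 0 <= f ob) -> (exists h f, Fm h f /\ 0 < f ob) ->
  Fm true !=set0 -> W !=set0.
Proof.
move=> Fm_ge0 [h0 [f0 [Ff0 f0_gt0]]] Ftrue.
have [c Fc] : {c : bool -> answer -> R & forall h, Fm h !=set0 -> Fm h (c h)}.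
  apply: (choice (P := fun h f => Fm h !=set0 -> Fm h f)) => h.
  have [[f Ff]|F0] := pselect (Fm h !=set0); first by exists f.
  by exists f0; move/F0.
pose c' h := if h == h0 then f0 else c h.
have Fc' h : Fm h !=set0 -> Fm h (c' h).
  by rewrite /c'; case: eqP => [->|_]; [| exact: Fc].
have sum_gt0 : 0 < \sum_(h : bool | `[< Fm h !=set0 >]) c' h ob.
  rewrite (bigD1 h0) ?asboolT //=; last by exists f0.
  apply: (lt_le_trans f0_gt0); rewrite {1}/c' eqxx lerDl.
  by apply: sumr_ge0 => h /andP[/asboolP /Fc' /Fm_ge0].
by exists (c' true ob / \sum_(h : bool | `[< Fm h !=set0 >]) c' h ob), c'; rewrite gt_eqF.
Qed.

Lemma wlowE : W !=set0 -> wlow Fm ob true = inf W.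
Proof. by move=> [w Ww]; rewrite /wlow asboolF // => W0; rewrite W0 in Ww. Qed.

Lemma wlow_ge lb : W !=set0 -> (forall w, W w -> lb <= w) -> lb <= wlow Fm ob true.
Proof. by move=> W_neq0 lbW; rewrite wlowE //; exact: lb_le_inf. Qed.

Lemma Wset_true_eq_set1 c : W !=set0 -> (forall w, W w -> w = c) -> W = [set c].
Proof.
move=> [w0 Ww0] eq_c; apply/seteqP; split=> [w /eq_c //|_ ->].
by rewrite -(eq_c w0 Ww0).
Qed.

Lemma wlow_eq c : W !=set0 -> (forall w, W w -> w = c) -> wlow Fm ob true = c.
Proof. by move=> W_neq0 eq_c; rewrite wlowE // (Wset_true_eq_set1 W_neq0 eq_c) inf1. Qed.

Lemma wup_le ub : 0 <= ub -> (forall w, W w -> w <= ub) -> wup Fm ob true <= ub.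
Proof.
move=> ub_ge0 Wub; rewrite /wup; case: asboolP => // W_neq0.
by apply: ge_sup => //; apply/set0P/eqP.
Qed.

Lemma wup_eq0 : (forall w, W w -> w = 0) -> wup Fm ob true = 0.
Proof.
move=> eq_0; rewrite /wup; case: asboolP => // /eqP/set0P W_neq0.
by rewrite (Wset_true_eq_set1 W_neq0 eq_0) sup1.
Qed.

Section Margins.
Variables A B : R.
Hypotheses (A_ge0 : 0 <= A) (B_ge0 : 0 <= B) (Fm_favours : favours Fm ob A B).

Lemma favours_Wset_true w : W w ->
  exists x y, [/\ A <= x, 0 <= y <= B, x + y != 0 & w = x / (x + y)].
Proof.
case: Fm_favours => FmA FmB /Wset_true_inv [f [y [Ff yF y0 xy_neq0 ->]]].
exists (f ob), y; split=> //; first exact: FmA.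
have [/yF [g Fg ->]|/y0 ->] := pselect (Fm false !=set0); first exact: FmB.
by rewrite lexx.
Qed.

Hypotheses (Fm_pos : exists h f, Fm h f /\ 0 < f ob) (Ftrue : Fm true !=set0).

Lemma favours_Wset_neq0 : W !=set0.
Proof.
apply: Wset_true_neq0 => //; case: Fm_favours => FmA FmB.
by case=> f Ff; [exact: le_trans A_ge0 (FmA f Ff) | case/andP: (FmB f Ff)].
Qed.

Lemma wlow_ge_margin : 0 < A + B -> A / (A + B) <= wlow Fm ob true.
Proof.
move=> AB_gt0; apply: wlow_ge; first exact: favours_Wset_neq0.
move=> w /favours_Wset_true [x [y [Ax yB xy_neq0 ->]]].
exact: ratio_ge_margin.
Qed.

Lemma wlow_eq1 : B = 0 -> wlow Fm ob true = 1.
Proof.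
move=> B0; apply: wlow_eq; first exact: favours_Wset_neq0.
move=> w /favours_Wset_true [x [y [Ax yB xy_neq0 ->]]].
have y0 : y = 0 by move: yB; rewrite B0; lra.
by rewrite y0 addr0 in xy_neq0 *; exact: divff.
Qed.

End Margins.

Section MarginsC.
Variables A B : R.
Hypotheses (A_ge0 : 0 <= A) (B_ge0 : 0 <= B).
Hypotheses (Fm_favoursC : favours (Fm \o negb) ob A B) (Ffalse : Fm false !=set0).

Lemma favoursC_Wset_true w : W w ->
  exists x y, [/\ A <= x, 0 <= y <= B, y + x != 0 & w = y / (y + x)].
Proof.
case: Fm_favoursC => FmA FmB.
move=> /Wset_true_inv [f [y [Ff /(_ Ffalse) [g Fg ->] _ yx_neq0 ->]]].
by exists (g ob), (f ob); split=> //; [exact: FmA | exact: FmB].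
Qed.

Lemma wup_le_margin : 0 < A + B -> wup Fm ob true <= B / (A + B).
Proof.
move=> AB_gt0; apply: wup_le; first by apply: divr_ge0 => //; lra.
move=> w /favoursC_Wset_true [x [y [Ax yB yx_neq0 ->]]].
exact: ratio_le_margin.
Qed.

Lemma wup_eq0_margin : B = 0 -> wup Fm ob true = 0.
Proof.
move=> B0; apply: wup_eq0 => w /favoursC_Wset_true [x [y [Ax yB yx_neq0 ->]]].
have y0 : y = 0 by move: yB; rewrite B0; lra.
by rewrite y0 mul0r.
Qed.

End MarginsC.
End EvidenceWeights.

Lemma add_gt0_of_pair_neq0 (R : realType) (x y : R) :
  0 <= x -> 0 <= y -> (x, y) <> (0, 0) -> 0 < x + y.
Proof.
move=> x_ge0 y_ge0 xy_neq0; rewrite lt_def addr_ge0 // andbT.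
by apply/eqP => xy0; apply: xy_neq0; congr pair; lra.
Qed.

Section Structure.
Variables (R : realType) (n : nat) (P C Lst : Type) (d : measure_display)
  (V : measurableType d) (N : pak_structure R n P C Lst V) (i : 'I_n).

Local Notation Ad_at psi s v := (Ad N i psi (L N i s) s (vcomp N v i)).

Lemma derandomizers_neq0 : [set: V] !=set0.
Proof.
apply/set0P/negP => /eqP V0; have := probability_setT (nu N).
by rewrite V0 measure0 => /eqP; rewrite eqe eq_sym oner_eq0.
Qed.

Lemma sat_xfree f s v v' : xfree f -> sat N s v f <-> sat N s v' f.
Proof.
elim: f s => [p|g IH|g IHg h IHh|g IHg h IHh|j g _|j g _|g _ a] //= s.
- by move=> /IH IHs; split=> ng /(IHs s); exact: ng.
- by case/andP=> /IHg IHgs /IHh IHhs; split=> -[/IHgs ? /IHhs ?].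
- by case/andP=> /IHg IHgs /IHh IHhs; split=> gh /IHgs /gh /IHhs.
Qed.

Lemma mu_ge0 psi t ob : 0 <= mu N i psi t ob.
Proof. exact/fine_ge0/measure_ge0. Qed.

Lemma mu_gt0 psi t v ob : Ad_at psi t v = ob -> 0 < mu N i psi t ob.
Proof.
move=> ans; apply/fine_gt0/andP; split.
  by apply/(answer_set_pos (p := N) i psi t ob).1; exists v.
by rewrite ltey_eq fin_num_measure //; exact: answer_set_measurable.
Qed.

Lemma Fam_weight_gt0 psi s v ob : xfree psi -> Ad_at psi s v = ob ->
  exists h f, Fam N i psi (L N i s) h f /\ 0 < f ob.
Proof.
move=> psi_xfree ans; have mu_s_gt0 := mu_gt0 ans.
have [sat_s|nsat_s] := pselect (sat N s v psi).
- exists true, (mu N i psi s); split=> //; exists s => //; split=> // v'.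
  exact: (sat_xfree s v v' psi_xfree).1.
- exists false, (mu N i psi s); split=> //; exists s => //; split=> // v' /=.
  by move/(sat_xfree s v' v psi_xfree).
Qed.

Lemma Fam_true_neq0 psi s v : xfree psi -> ~ sat N s v (Know i (Neg psi)) ->
  Fam N i psi (L N i s) true !=set0.
Proof.
move=> psi_xfree notK; apply: contrapT => Fam0; apply: notK => t v' Lt sat_t.
apply: Fam0; exists (mu N i psi t), t => //; split=> // v''.
exact: (sat_xfree t v' v'' psi_xfree).1.
Qed.

Lemma Fam_false_neq0 psi s v : xfree psi -> ~ sat N s v (Know i psi) ->
  Fam N i psi (L N i s) false !=set0.
Proof.
move=> psi_xfree notK; apply: contrapT => Fam0; apply: notK => t v' Lt.
apply: contrapT => nsat_t; apply: Fam0.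
exists (mu N i psi t), t => //; split=> // v'' /=.
by move/(sat_xfree t v'' v' psi_xfree).
Qed.

Lemma Fam_Neg_true_neq0 psi l :
  Fam N i psi l false !=set0 -> Fam N i (Neg psi) l true !=set0.
Proof. by case=> _ [t S_t _]; exists (mu N i (Neg psi) t), t. Qed.

Section Reliability.
Variables (phi : pform n P R) (alpha beta : R).
Hypotheses (neg : respects_negation N i) (compl : phi_complete N i phi)
  (rel : reliable N i phi alpha beta).

Lemma Ad_Neg_Yes psi l s v :
  Ad N i psi l s (vcomp N v i) = Yes -> Ad N i (Neg psi) l s (vcomp N v i) = No.
Proof. by case: neg => -> ->. Qed.

Lemma Ad_Neg_phi_Yes s v : Ad_at (Neg phi) s v = Yes -> Ad_at phi s v = No.
Proof. by case: neg => ->; case: (compl s v) => ->. Qed.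

Lemma complete_mu_No t : mu N i phi t No = 1 - mu N i phi t Yes.
Proof.
rewrite /mu; have -> : [set v | Ad_at phi t v = No] = ~` [set v | Ad_at phi t v = Yes].
  by apply/seteqP; split=> v /=; case: (compl t v) => ->.
rewrite probability_setC; last exact: answer_set_measurable.
by rewrite fineB // fin_num_measure //; exact: answer_set_measurable.
Qed.

Lemma mu_Neg_phi t :
  mu N i (Neg phi) t Yes = mu N i phi t No /\ mu N i (Neg phi) t No = mu N i phi t Yes.
Proof.
by rewrite /mu; split; congr (fine (nu N _)); apply/seteqP;
  split=> v /=; case: neg => ->; case: (compl t v) => ->.
Qed.

Lemma Fam_phi_weights l h f : Fam N i phi l h f ->
  [/\ f No = 1 - f Yes, 0 <= f No & if h then alpha <= f Yes else 0 <= f Yes <= beta].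
Proof.
case=> t [_ sat_t] <-; have [v _] := derandomizers_neq0.
split; [exact: complete_mu_No | exact: mu_ge0 |].
by case: h sat_t => sat_t; [exact: (rel t v).1 | rewrite mu_ge0; exact: (rel t v).2].
Qed.

Lemma Fam_Neg_phi_swap l h f : Fam N i (Neg phi) l h f ->
  exists2 g, Fam N i phi l (~~ h) g & f Yes = g No /\ f No = g Yes.
Proof.
case=> t [Lt sat_t] <-; exists (mu N i phi t); last exact: mu_Neg_phi.
exists t => //; split=> // v; case: h sat_t => /(_ v) //=.
exact: contrapT.
Qed.

Lemma favours_phi_Yes l : favours (Fam N i phi l) Yes alpha beta.
Proof. by split=> f /Fam_phi_weights []. Qed.

Lemma favours_phi_No l : favours (Fam N i phi l \o negb) No (1 - beta) (1 - alpha).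
Proof. by split=> f /= /Fam_phi_weights /= [-> ? ?]; lra. Qed.

Lemma favours_Neg_phi_Yes l : favours (Fam N i (Neg phi) l) Yes (1 - beta) (1 - alpha).
Proof.
have [FA FB] := favours_phi_No l.
by split=> f /Fam_Neg_phi_swap [g Fg [-> _]]; [exact: FA | exact: FB].
Qed.

Lemma favours_Neg_phi_No l : favours (Fam N i (Neg phi) l \o negb) No alpha beta.
Proof.
have [FA FB] := favours_phi_Yes l.
by split=> f /= /Fam_Neg_phi_swap [g Fg [_ ->]]; [exact: FA | exact: FB].
Qed.

Hypotheses (alpha_ge0 : 0 <= alpha) (alpha_le1 : alpha <= 1)
  (beta_ge0 : 0 <= beta) (beta_le1 : beta <= 1) (phi_xfree : xfree phi).

Lemma Ev_margins_X_phi s v : sat N s v (And (Xalg i phi) (Neg (Know i (Neg phi)))) ->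
  (0 < alpha + beta ->
   alpha / (alpha + beta) <= EvLow N i phi s v /\
   EvUp N i (Neg phi) s v <= beta / (alpha + beta)) /\
  (beta = 0 -> EvLow N i phi s v = 1 /\ EvUp N i (Neg phi) s v = 0).
Proof.
move=> [Xs notK]; rewrite /EvLow /EvUp Xs (Ad_Neg_Yes Xs).
have Fphi := favours_phi_Yes (L N i s); have FNeg := favours_Neg_phi_No (L N i s).
have pos := Fam_weight_gt0 phi_xfree Xs; have Ftrue := Fam_true_neq0 (v := v) phi_xfree notK.
have Ffalse : Fam N i (Neg phi) (L N i s) false !=set0.
  exact: (Fam_false_neq0 (psi := Neg phi) (v := v)).
split=> [ab_gt0|b0]; split.
- exact: wlow_ge_margin alpha_ge0 beta_ge0 Fphi pos Ftrue ab_gt0.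
- exact: wup_le_margin alpha_ge0 beta_ge0 FNeg Ffalse ab_gt0.
- exact: wlow_eq1 alpha_ge0 beta_ge0 Fphi pos Ftrue b0.
- exact: wup_eq0_margin FNeg Ffalse b0.
Qed.

Lemma Ev_margins_X_Neg_phi s v : sat N s v (And (Xalg i (Neg phi)) (Neg (Know i phi))) ->
  (0 < (1 - beta) + (1 - alpha) ->
   (1 - beta) / ((1 - beta) + (1 - alpha)) <= EvLow N i (Neg phi) s v /\
   EvUp N i phi s v <= (1 - alpha) / ((1 - beta) + (1 - alpha))) /\
  (1 - alpha = 0 -> EvLow N i (Neg phi) s v = 1 /\ EvUp N i phi s v = 0).
Proof.
move=> [Xs notK]; rewrite /EvLow /EvUp Xs (Ad_Neg_phi_Yes Xs).
have A_ge0 : 0 <= 1 - beta by rewrite subr_ge0.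
have B_ge0 : 0 <= 1 - alpha by rewrite subr_ge0.
have FNeg := favours_Neg_phi_Yes (L N i s); have Fphi := favours_phi_No (L N i s).
have pos := Fam_weight_gt0 (phi_xfree : xfree (Neg phi)) Xs.
have Ffalse := Fam_false_neq0 (v := v) phi_xfree notK.
have Ftrue := Fam_Neg_true_neq0 Ffalse.
split=> [ab_gt0|a1]; split.
- exact: wlow_ge_margin A_ge0 B_ge0 FNeg pos Ftrue ab_gt0.
- exact: wup_le_margin A_ge0 B_ge0 Fphi Ffalse ab_gt0.
- exact: wlow_eq1 A_ge0 B_ge0 FNeg pos Ftrue a1.
- exact: wup_eq0_margin Fphi Ffalse a1.
Qed.

End Reliability.
End Structure.

Theorem proposition5p5 (R : realType) (n : nat) (P C Lst : Type)
    (d : measure_display) (V : measurableType d)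
    (N : pak_structure R n P C Lst V) (i : 'I_n) (phi : pform n P R)
    (alpha beta : R) :
  xfree phi ->
  0 <= alpha <= 1 -> 0 <= beta <= 1 ->
  respects_negation N i ->
  phi_complete N i phi ->
  reliable N i phi alpha beta ->
  (* (a) *)
  ((alpha, beta) <> (0, 0) ->
   forall (s : state N) (v : V),
     sat N s v (And (Xalg i phi) (Neg (Know i (Neg phi)))) ->
     alpha / (alpha + beta) <= EvLow N i phi s v /\
     EvUp N i (Neg phi) s v <= beta / (alpha + beta)) /\
  (* (b) *)
  ((alpha, beta) = (0, 0) ->
   forall (s : state N) (v : V),
     sat N s v (And (Xalg i phi) (Neg (Know i (Neg phi)))) ->
     EvLow N i phi s v = 1 /\ EvUp N i (Neg phi) s v = 0) /\
  (* (c) *)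
  ((alpha, beta) <> (1, 1) ->
   forall (s : state N) (v : V),
     sat N s v (And (Xalg i (Neg phi)) (Neg (Know i phi))) ->
     (1 - beta) / (2 - (alpha + beta)) <= EvLow N i (Neg phi) s v /\
     EvUp N i phi s v <= (1 - alpha) / (2 - (alpha + beta))) /\
  (* (d) *)
  ((alpha, beta) = (1, 1) ->
   forall (s : state N) (v : V),
     sat N s v (And (Xalg i (Neg phi)) (Neg (Know i phi))) ->
     1 / 2 <= EvLow N i (Neg phi) s v /\ EvUp N i phi s v <= 1 / 2).
Proof.
move=> phi_xfree /andP[a_ge0 a_le1] /andP[b_ge0 b_le1] neg compl rel.
have X_phi := Ev_margins_X_phi neg compl rel a_ge0 b_ge0 phi_xfree.
have X_Neg_phi := Ev_margins_X_Neg_phi neg compl rel a_le1 b_le1 phi_xfree.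
split; [|split; [|split]].
- move=> /(add_gt0_of_pair_neq0 a_ge0 b_ge0) ab_gt0 s v.
  by case/X_phi => /(_ ab_gt0).
- by case=> _ b0 s v; case/X_phi => _ /(_ b0).
- move=> ab_neq1 s v; case/X_Neg_phi => + _.
  have -> : 2 - (alpha + beta) = (1 - beta) + (1 - alpha) by lra.
  apply; apply: add_gt0_of_pair_neq0; rewrite ?subr_ge0 //.
  by case=> b1 a1; apply: ab_neq1; congr pair; lra.
- case=> a1 _ s v; case/X_Neg_phi => _ /(_ _)[|-> ->]; first by rewrite a1 subrr.
  by split; lra.
Qed.
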